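(* In a strategic game in the setting described in the context, if Assumption SAV is satisfied, then for all players $i,j\in\{1,\dots,n\}$ the graphs $\mathcal{S}_{ij}$ and $\mathcal{S}_{ji}$ are congruent, i.e., $\mathcal{S}_{ij}=\{(s_i,s_j):(s_j,s_i)\in\mathcal{S}_{ji}\}$; equivalently $\Psi_{ji}(\Psi_{ij}(s_i))=s_i$ for every strategy $s_i$ of player $i$ and $\Psi_{ij}(\Psi_{ji}(s_j))=s_j$ for every strategy $s_j$ of player $j$.
   Context: Setting: there are $n\ge 2$ players and a measurable space $(\Omega,\mathcal{F})$. Each player $i$ has a prior $p_i$, an action set $A_i\subseteq\mathbb{R}$ with $|A_i|>1$, and a finite private information partition $\mathcal{I}_i$ of $\Omega$. The priors are equivalent (same null sets), and strategies agreeing up to null events are identified. A strategy of player $i$ is a $\sigma(\mathcal{I}_i)$-measurable function $s_i:\Omega\to A_i$, and player $i$ may apply any such function. For each strategy $s_i$, player $i$ has a unique conjecture $\Psi_i(s_i)$ about the tuple of strategies of the other players; $\Psi_{ij}(s_i)$ denotes its component for player $j$ (player $i$'s conjecture about player $j$'s strategy given that $i$ applies $s_i$). The graph $\mathcal{S}_{ij}$ is the set of all pairs $(s_i,\Psi_{ij}(s_i))$ with $s_i$ ranging over all strategies of player $i$. Assumption SAV (strategic certainty): for every player $i$ and every strategy $s_i$, $\Psi_i(s_i)$ equals the true tuple of strategies the other players apply in response to $s_i$. *)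

From HB Require Import structures.
From mathcomp Require Import all_boot all_order all_algebra.
From mathcomp Require Import all_classical all_reals all_analysis.
Set Implicit Arguments. Unset Strict Implicit. Unset Printing Implicit Defensive.
Import Order.TTheory GRing.Theory Num.Theory.
Local Open Scope classical_set_scope.
Local Open Scope ring_scope.

Section Game.
Context {R : realType} {d : measure_display} {Omega : measurableType d}.

Definition equiv_priors (P Q : probability Omega R) : Prop :=
  forall E : set Omega, measurable E -> (P E = 0%E <-> Q E = 0%E).

(* The private information partition of player i is given by a labelling
   map [part : Omega -> K] into a finite type; the cells are its fibers,
   each of which is required to be measurable. *)
Definition measurable_partition (K : finType) (part : Omega -> K) : Prop :=
  forall k : K, measurable (part @^-1` [set k]).

(* A strategy of a player with action set [A] and information partition
   [part]: a sigma(I)-measurable map Omega -> A, i.e. (I finite) a map with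
   values in A that is constant on every information cell. *)
Definition is_strategy (A : set R) (K : finType) (part : Omega -> K)
  (s : Omega -> R) : Prop :=
  (forall w, A (s w)) /\ (forall w w', part w = part w' -> s w = s w').

(* Identification of strategies agreeing up to a null event (w.r.t. a prior;
   all priors have the same null sets). *)
Definition aeq_strat (P : probability Omega R) (s t : Omega -> R) : Prop :=
  P [set w | s w <> t w] = 0%E.

End Game.

(* Take the profile p actually played when player i applies s.  By SAV, player
   i's conjecture Psi_ij(s) is p_j up to a null set, so p is also the profile
   played when player j applies Psi_ij(s); SAV for player j then gives
   Psi_ji(Psi_ij(s)) = p_i = s.  The graph identity follows by well-definedness
   of Psi_ji on null-set classes. *)
From HB Require Import structures.
From mathcomp Require Import all_boot all_order all_algebra.
From mathcomp Require Import all_classical all_reals all_analysis.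
Local Open Scope classical_set_scope.
Local Open Scope ring_scope.

Import Order.TTheory GRing.Theory Num.Theory.

Section StrategyEquality.
Context {R : realType} {d : measure_display} {Omega : measurableType d}.
Context {A : set R} {K : finType} {part : Omega -> K}.
Hypothesis hpart : measurable_partition part.

Lemma measurable_neq_strategy {s t : Omega -> R} :
  is_strategy A part s -> is_strategy A part t -> measurable [set w | s w <> t w].
Proof.
move=> [_ s_cst] [_ t_cst].
have -> : [set w | s w <> t w] =
    \bigcup_(k in [set part w | w in [set w | s w <> t w]]) part @^-1` [set k].
  apply/seteqP; split => [w stw | w [_ [w' stw' <-]] /= w'w].
    by exists (part w) => //; exists w.
  by rewrite (s_cst w w') ?(t_cst w w').
apply: fin_bigcup_measurable => [|k _]; last exact: hpart.
exact: finite_finset.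
Qed.

Lemma aeq_strat_sym {P : probability Omega R} {s t : Omega -> R} :
  aeq_strat P s t -> aeq_strat P t s.
Proof.
by rewrite /aeq_strat; congr (P _ = _); apply/seteqP; split => w /= + e; apply.
Qed.

Lemma aeq_strat_trans {P : probability Omega R} {s t u : Omega -> R} :
  is_strategy A part s -> is_strategy A part t -> is_strategy A part u ->
  aeq_strat P s t -> aeq_strat P t u -> aeq_strat P s u.
Proof.
move=> hs ht hu st0 tu0.
have mst := measurable_neq_strategy hs ht.
have mtu := measurable_neq_strategy ht hu.
apply/eqP; rewrite eq_le measure_ge0 andbT.
apply: (@le_trans _ _ (P ([set w | s w <> t w] `|` [set w | t w <> u w]))).
  apply: le_measure; rewrite ?inE //; first exact: measurable_neq_strategy.
    exact: measurableU.
  by move=> w /= su; case: (pselect (s w = t w)) => [<-|]; [right | left].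
apply: le_trans (measureU2 _ mst mtu) _.
(* [P] reaches the goal through a different coercion path than in [st0], so
   the two null measures are matched up to conversion rather than rewritten. *)
have sum_null (x y : \bar R) : x = 0%E -> y = 0%E -> (x + y <= 0)%E.
  by move=> -> ->; rewrite adde0.
exact: sum_null st0 tu0.
Qed.

End StrategyEquality.

Section StrategicCertainty.
Context {R : realType} {d : measure_display} {Omega : measurableType d} {n : nat}.
Context {P : 'I_n -> probability Omega R} {A : 'I_n -> set R}.
Context {K : 'I_n -> finType} {part : forall i, Omega -> K i}.
Context {Psi : 'I_n -> (Omega -> R) -> 'I_n -> (Omega -> R)}.
Context {Realized : ('I_n -> (Omega -> R)) -> Prop}.

Local Notation strategy i := (is_strategy (A i) (part i)).

Hypothesis hpart : forall i, measurable_partition (part i).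
Hypothesis hPsi_strat : forall {i s}, strategy i s ->
  forall {j}, j != i -> strategy j (Psi i s j).
Hypothesis hPsi_wd : forall {i s t}, strategy i s -> strategy i t ->
  aeq_strat (P i) s t -> forall {j}, j != i -> aeq_strat (P j) (Psi i s j) (Psi i t j).
Hypothesis hReal_strat : forall {p}, Realized p -> forall j, strategy j (p j).
Hypothesis hReal_ex : forall {i s}, strategy i s ->
  exists p, Realized p /\ aeq_strat (P i) (p i) s.
Hypothesis hSAV : forall {i s}, strategy i s ->
  forall {p}, Realized p -> aeq_strat (P i) (p i) s ->
  forall {j}, j != i -> aeq_strat (P j) (Psi i s j) (p j).

Lemma Psi_involutive {i j s} : i != j -> strategy i s ->
  aeq_strat (P i) (Psi j (Psi i s j) i) s.
Proof.
move=> ij hs; have ji : j != i by rewrite eq_sym.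
have [p [p_real p_i]] := hReal_ex hs.
have hPsi_s := hPsi_strat hs ji.
have Psi_s_pj := hSAV hs p_real p_i ji.
have back := hSAV hPsi_s p_real (aeq_strat_sym Psi_s_pj) ij.
exact: (aeq_strat_trans (hpart i) (hPsi_strat hPsi_s ij) (hReal_strat p_real i)
  hs back p_i).
Qed.

Lemma aeq_Psi_flip {i j s t} : i != j -> strategy i s -> strategy j t ->
  aeq_strat (P j) t (Psi i s j) -> aeq_strat (P i) s (Psi j t i).
Proof.
move=> ij hs ht t_Psi_s; have ji : j != i by rewrite eq_sym.
have hPsi_s := hPsi_strat hs ji.
apply: aeq_strat_sym.
exact: (aeq_strat_trans (hpart i) (hPsi_strat ht ij) (hPsi_strat hPsi_s ij) hs
  (hPsi_wd ht hPsi_s t_Psi_s ij) (Psi_involutive ij hs)).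
Qed.

End StrategicCertainty.

Theorem proposition1
  (R : realType) (d : measure_display) (Omega : measurableType d)
  (n : nat) (hn : (2 <= n)%N)
  (* priors, pairwise equivalent *)
  (P : 'I_n -> probability Omega R)
  (hP : forall i j, equiv_priors (P i) (P j))
  (* action sets A_i ⊆ R with |A_i| > 1 *)
  (A : 'I_n -> set R)
  (hA : forall i, exists a b, A i a /\ A i b /\ a <> b)
  (* finite private information partitions *)
  (K : 'I_n -> finType) (part : forall i, Omega -> K i)
  (hpart : forall i, measurable_partition (part i))
  (* conjectures: Psi i s j = player i's conjecture about player j's strategy
     when i applies s (meaningful for j <> i) *)
  (Psi : 'I_n -> (Omega -> R) -> 'I_n -> (Omega -> R))
  (hPsi_strat : forall i s, is_strategy (A i) (part i) s ->
      forall j, j != i -> is_strategy (A j) (part j) (Psi i s j))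
  (hPsi_wd : forall i s t, is_strategy (A i) (part i) s ->
      is_strategy (A i) (part i) t -> aeq_strat (P i) s t ->
      forall j, j != i -> aeq_strat (P j) (Psi i s j) (Psi i t j))
  (* the true play: the set [Realized] of strategy profiles that can actually
     occur; whatever strategy s_i player i applies, the others respond with a
     uniquely determined (up to null events) tuple of strategies *)
  (Realized : ('I_n -> (Omega -> R)) -> Prop)
  (hReal_strat : forall p, Realized p -> forall j, is_strategy (A j) (part j) (p j))
  (hReal_ex : forall i s, is_strategy (A i) (part i) s ->
      exists p, Realized p /\ aeq_strat (P i) (p i) s)
  (hReal_uniq : forall i p q, Realized p -> Realized q -> aeq_strat (P i) (p i) (q i) ->
      forall j, aeq_strat (P j) (p j) (q j))
  (* Assumption SAV *)
  (hSAV : forall i s, is_strategy (A i) (part i) s ->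
      forall p, Realized p -> aeq_strat (P i) (p i) s ->
      forall j, j != i -> aeq_strat (P j) (Psi i s j) (p j)) :
  forall i j : 'I_n, i != j ->
    (* S_ij = {(s_i, s_j) : (s_j, s_i) in S_ji} *)
    (forall s t,
       (is_strategy (A i) (part i) s /\ is_strategy (A j) (part j) t /\
        aeq_strat (P j) t (Psi i s j))
       <->
       (is_strategy (A j) (part j) t /\ is_strategy (A i) (part i) s /\
        aeq_strat (P i) s (Psi j t i)))
    /\ (forall s, is_strategy (A i) (part i) s -> aeq_strat (P i) (Psi j (Psi i s j) i) s)
    /\ (forall t, is_strategy (A j) (part j) t -> aeq_strat (P j) (Psi i (Psi j t i) j) t).
Proof.
move=> i j ij; have ji : j != i by rewrite eq_sym.
have flip := aeq_Psi_flip hpart hPsi_strat hPsi_wd hReal_strat hReal_ex hSAV.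
have invol := Psi_involutive hpart hPsi_strat hReal_strat hReal_ex hSAV.
split; [move=> s t; split | split].
- by move=> [hs [ht st]]; split; [|split]; last exact: flip ij hs ht st.
- by move=> [ht [hs ts]]; split; [|split]; last exact: flip ji ht hs ts.
- by move=> s; exact: invol ij.
- by move=> t; exact: invol ji.
Qed.
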